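(* Let $n>2$ be odd and let $\mathbf{A}_n$ be the algebra defined below. For every $(n-1)$-element subset $E$ of $A_n$ there is a term operation $t$ of $\mathbf{A}_n$ satisfying $t(y,x,x)=t(x,y,x)=t(x,x,y)=y$ for all $x,y\in E$.
   Context: Let $[n]=\{1,\dots,n\}$ and let $m$ be the minority operation on $[n]$ given by $m(x,y,z)=x$ if $y=z$, $m(x,y,z)=y$ if $x=z$, and $m(x,y,z)=z$ otherwise. On $\{0,1,2,3\}$, $+,-$ denote arithmetic modulo 4 and $\oplus$ denotes bitwise XOR of 2-bit binary representations. Let $A_n=[n]\times\{0,1,2,3\}$. For $i\in[n]$ define the ternary operation $t_i$ on $A_n$ by $t_i((a_1,b_1),(a_2,b_2),(a_3,b_3))=(i,\,b_1-b_2+b_3)$ if $a_1=a_2=a_3=i$, and $=(m(a_1,a_2,a_3),\,b_1\oplus b_2\oplus b_3)$ otherwise. The algebra $\mathbf{A}_n$ has universe $A_n$ and basic operations $t_1,\dots,t_n$. *)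

From mathcomp Require Import all_boot all_algebra.
Set Implicit Arguments. Unset Strict Implicit. Unset Printing Implicit Defensive.

(* [n] = {1,...,n} is represented by 'I_n = {0,...,n-1} (relabeling i |-> i-1).
   {0,1,2,3} is 'I_4. *)
Definition carrier (n : nat) : finType := ('I_n * 'I_4)%type.

Definition minority (n : nat) (x y z : 'I_n) : 'I_n :=
  if y == z then x else if x == z then y else z.

Definition affine4 (a b c : 'I_4) : 'I_4 := inZp (a + (4 - b) + c).

Definition xor4_nat (a b : nat) : nat :=
  ((odd a) (+) (odd b)) + 2 * ((odd a./2) (+) (odd b./2)).
Definition xor4 (a b : 'I_4) : 'I_4 := inZp (xor4_nat a b).

Definition top (n : nat) (i : 'I_n) (u v w : carrier n) : carrier n :=
  if [&& u.1 == i, v.1 == i & w.1 == i]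
  then (i, affine4 u.2 v.2 w.2)
  else (minority u.1 v.1 w.1, xor4 (xor4 u.2 v.2) w.2).

Inductive term3 (n : nat) : Type :=
| Var : 'I_3 -> term3 n
| App : 'I_n -> term3 n -> term3 n -> term3 n -> term3 n.

Fixpoint eval3 (n : nat) (t : term3 n) (x0 x1 x2 : carrier n) : carrier n :=
  match t with
  | Var k => if val k == 0 then x0 else if val k == 1 then x1 else x2
  | App i a b c => top i (eval3 a x0 x1 x2) (eval3 b x0 x1 x2) (eval3 c x0 x1 x2)
  end.

From mathcomp Require Import all_boot.

(* An (n-1)-element subset of A_n meets at most n-1 of the n blocks {i} x {0,1,2,3},
   so some index i misses it entirely; on elements outside block i the operation t_i
   is the product of two minority operations (minority on [n], XOR on {0,1,2,3}),
   hence t_i itself is the required term. *)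

Lemma minority_is_minority {n : nat} (x y : 'I_n) :
  [/\ minority y x x = y, minority x y x = y & minority x x y = y].
Proof.
rewrite /minority; split; rewrite ?eqxx //.
  by case: (eqVneq y x) => [->|]; rewrite ?eqxx.
by case: (eqVneq x y) => [->|]; rewrite ?eqxx.
Qed.

Lemma xor4_is_minority (x y : 'I_4) :
  [/\ xor4 (xor4 y x) x = y, xor4 (xor4 x y) x = y & xor4 (xor4 x x) y = y].
Proof.
by split; apply/val_inj; move: x y => [[|[|[|[|?]]]] ?] [[|[|[|[|?]]]] ?].
Qed.

Lemma top_is_minority_off {n : nat} (i : 'I_n) (x y : carrier n) :
  x.1 != i -> y.1 != i ->
  [/\ top i y x x = y, top i x y x = y & top i x x y = y].
Proof.
move=> /negbTE xi /negbTE yi; rewrite /top xi yi /=.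
have [m1 m2 m3] := minority_is_minority x.1 y.1.
have [b1 b2 b3] := xor4_is_minority x.2 y.2.
by rewrite m1 m2 m3 b1 b2 b3 -surjective_pairing.
Qed.

Lemma exists_index_off {n : nat} (E : {set carrier n}) :
  #|E| < n -> exists i : 'I_n, forall x, x \in E -> x.1 != i.
Proof.
move=> small.
set S := [set x.1 | x in E].
have : 0 < #|~: S|.
  rewrite -(ltn_add2l #|S|) addn0 cardsC card_ord.
  exact: leq_ltn_trans (leq_imset_card _ _) small.
case/card_gt0P => i; rewrite in_setC => notS; exists i => x xE.
by apply: contraNneq notS => <-; apply: imset_f.
Qed.

Theorem claim5p3 (n : nat) (hn : 2 < n) (hodd : odd n)
  (E : {set carrier n}) (hE : #|E| = n.-1) :
  exists t : term3 n, forall x y, x \in E -> y \in E ->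
    [/\ eval3 t y x x = y, eval3 t x y x = y & eval3 t x x y = y].
Proof.
have [i offE] : exists i : 'I_n, forall x, x \in E -> x.1 != i.
  by apply: exists_index_off; rewrite hE prednK // (ltn_trans _ hn).
exists (App i (Var _ (@Ordinal 3 0 isT)) (Var _ (@Ordinal 3 1 isT))
              (Var _ (@Ordinal 3 2 isT))).
by move=> x y xE yE; apply: top_is_minority_off; apply: offE.
Qed.
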